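(* Prioritized planning with any given priority ordering is incomplete for the class of P-solvable MAPF instances: for every integer $M\ge 2$ and every strict partial order $\prec$ on $\{1,\dots,M\}$, there exists a P-solvable MAPF instance with agents $a_1,\dots,a_M$ such that prioritized planning with $\prec$ does not result in a solution.
   Context: A MAPF instance consists of a connected undirected graph $G=(V,E)$ and $M$ agents $a_1,\dots,a_M$; agent $a_i$ has a start vertex $s_i$ and a target vertex $t_i$, and start vertices are pairwise distinct, as are target vertices. Time is discrete; at each time step every agent either moves to an adjacent vertex or waits. A path for $a_i$ is a sequence $\pi_i=\langle \pi_i(0),\pi_i(1),\dots\rangle$ with $\pi_i(0)=s_i$, consecutive vertices equal or adjacent, and $\pi_i(t)=t_i$ for all $t\ge T_i$, where the arrival time $T_i$ is the least such time. Two agents collide if they occupy the same vertex at the same time, or traverse the same edge in opposite directions at the same time step. A solution is a collision-free set of paths, one per agent. A priority ordering is a strict partial order $\prec$ on $\{1,\dots,M\}$ ($a_i$ has higher priority than $a_j$ iff $i\prec j$). A solution $\{\pi_i\}$ is consistent with $\prec$ if higher priority agents never wait for lower priority agents, i.e. for every $i$ the arrival time $T_i$ of $\pi_i$ equals the minimum arrival time over all paths for $a_i$ that do not collide with any $\pi_k$ with $k\prec i$. A MAPF instance is P-solvable iff it has a solution consistent with some priority ordering. Prioritized planning with $\prec$: agents are processed in an order compatible with $\prec$; each agent $a_j$ is assigned a path of minimum arrival time among paths that do not collide with the already computed paths of all $a_k$ with $k\prec j$ (ties broken arbitrarily); it fails if some agent has no such path, and otherwise results in a solution iff the resulting plan is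 collision-free. *)

From mathcomp Require Import all_boot.
Set Implicit Arguments. Unset Strict Implicit. Unset Printing Implicit Defensive.

Section MAPF.
Variable V : finType.
Variable e : rel V.

Definition walk := nat -> V.

Definition arrived_from (p : walk) (t : V) (T : nat) : Prop :=
  forall k, T <= k -> p k = t.

Definition arrival_time (p : walk) (t : V) (T : nat) : Prop :=
  arrived_from p t T /\ forall T', arrived_from p t T' -> T <= T'.

Definition is_path (s t : V) (p : walk) : Prop :=
  p 0 = s /\
  (forall k, p k.+1 = p k \/ e (p k) (p k.+1)) /\
  exists T, arrived_from p t T.

(* Vertex collision or swap (same edge in opposite directions). *)
Definition collide (p q : walk) : Prop :=
  exists k, p k = q k \/ (p k = q k.+1 /\ p k.+1 = q k).

Definition undirected_connected : Prop :=
  symmetric e /\ irreflexive e /\ forall x y : V, connect e x y.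

Variable M : nat.
Variables (s t : 'I_M -> V).

Definition mapf_instance : Prop :=
  undirected_connected /\ injective s /\ injective t.

Definition solution (pi : 'I_M -> walk) : Prop :=
  (forall i, is_path (s i) (t i) (pi i)) /\
  (forall i j, i != j -> ~ collide (pi i) (pi j)).

(* Strict partial order on the agents; i ≺ j means a_i has higher priority. *)
Definition strict_partial_order (prec : 'I_M -> 'I_M -> Prop) : Prop :=
  (forall i, ~ prec i i) /\ (forall i j k, prec i j -> prec j k -> prec i k).

Definition avoids_higher (prec : 'I_M -> 'I_M -> Prop) (pi : 'I_M -> walk)
  (i : 'I_M) (p : walk) : Prop :=
  forall k, prec k i -> ~ collide p (pi k).

Definition min_arrival_avoiding (prec : 'I_M -> 'I_M -> Prop)
  (pi : 'I_M -> walk) (i : 'I_M) (T : nat) : Prop :=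
  (exists p, is_path (s i) (t i) p /\ avoids_higher prec pi i p /\
             arrival_time p (t i) T) /\
  (forall p T', is_path (s i) (t i) p -> avoids_higher prec pi i p ->
                arrival_time p (t i) T' -> T <= T').

(* A solution consistent with prec: higher priority agents never wait for
   lower priority ones. *)
Definition consistent_solution (prec : 'I_M -> 'I_M -> Prop)
  (pi : 'I_M -> walk) : Prop :=
  solution pi /\
  forall i, exists T, arrival_time (pi i) (t i) T /\
                      min_arrival_avoiding prec pi i T.

Definition P_solvable : Prop :=
  exists prec, strict_partial_order prec /\
    exists pi, consistent_solution prec pi.

(* A (successful) run of prioritized planning with prec: every agent j is
   assigned a path of minimum arrival time among the paths not colliding
   with the already computed paths of all a_k with k ≺ j.  Ties may be
   broken arbitrarily, so any such family is a possible run; the assignment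
   of agent j only depends on the paths of agents k ≺ j, hence on no
   particular processing order compatible with prec. *)
Definition pp_run (prec : 'I_M -> 'I_M -> Prop) (pi : 'I_M -> walk) : Prop :=
  forall j, is_path (s j) (t j) (pi j) /\ avoids_higher prec pi j (pi j) /\
    exists T, arrival_time (pi j) (t j) T /\ min_arrival_avoiding prec pi j T.

(* Prioritized planning with prec results in a solution: some run (for some
   tie-breaking) succeeds and its plan is collision-free. *)
Definition pp_results_in_solution (prec : 'I_M -> 'I_M -> Prop) : Prop :=
  exists pi, pp_run prec pi /\ solution pi.

End MAPF.

From mathcomp Require Import all_boot.
From Stdlib Require Import Classical.
Set Implicit Arguments. Unset Strict Implicit. Unset Printing Implicit Defensive.

(* Let b be a minimal agent for the priority order and a any other agent.  On the
   star graph with centre [None], one leaf per agent and a spare leaf, every agent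
   starts on its own leaf, a must reach the spare leaf, b the centre, and the others
   stay put.  Nothing constrains b, so prioritized planning moves b into the centre
   at time 1, where it stays forever; but a can only leave its leaf through the
   centre, at some time >= 1, and collides with b.  Under the order "a before b"
   alone, a crosses the centre at time 1 while b waits one step, and this plan is
   consistent, so the instance is P-solvable. *)

Lemma strict_order_minimal_in (T : eqType) (prec : T -> T -> Prop) (l : seq T) :
  (forall x, ~ prec x x) -> (forall x y z, prec x y -> prec y z -> prec x z) ->
  l != [::] -> exists2 b, b \in l & forall k, k \in l -> ~ prec k b.
Proof.
move=> irr trans; elim: l => [//|x l IHl] _.
have [->|/IHl [b bl b_min]] := eqVneq l [::].
  by exists x => [|k]; rewrite ?inE // => /eqP ->.
have [xb|not_xb] := classic (prec x b).
  exists x; first exact: mem_head.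
  move=> k; rewrite inE => /predU1P [->|kl]; first exact: irr.
  by move=> kx; apply: (b_min k kl); apply: trans xb.
exists b; first by rewrite inE bl orbT.
by move=> k; rewrite inE => /predU1P [->|/b_min].
Qed.

Lemma strict_order_minimal (T : finType) (prec : T -> T -> Prop) (x0 : T) :
  (forall x, ~ prec x x) -> (forall x y z, prec x y -> prec y z -> prec x z) ->
  exists b, forall k, ~ prec k b.
Proof.
move=> irr trans.
have /(strict_order_minimal_in irr trans) [b _ b_min] : enum T != [::].
  by apply/eqP => enumT0; move: (mem_enum T x0); rewrite enumT0.
by exists b => k; apply: b_min; rewrite mem_enum.
Qed.

Section Walks.
Variable V : finType.
Implicit Types (p q : walk V) (v : V).

Lemma collide_sym p q : collide p q -> collide q p.
Proof. by case=> k [pq|[pq pq']]; exists k; [left|right]. Qed.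

Lemma no_collide_const p v : (forall k, p k <> v) -> ~ collide p (fun=> v).
Proof. by move=> p_v [k [/p_v|[/p_v]]]. Qed.

Lemma arrival_time_succ p v T :
  arrived_from p v T.+1 -> p T <> v -> arrival_time p v T.+1.
Proof.
move=> arr pT; split=> // T' arr'; rewrite ltnNge; apply/negP => T'T.
exact/pT/arr'.
Qed.

Lemma arrival_time_exists p v T :
  arrived_from p v T -> exists2 T0, arrival_time p v T0 & T0 <= T.
Proof.
elim: T => [|T IHT] arr; first by exists 0.
have [pT|pT] := eqVneq (p T) v.
  have [|T0 arr0 T0T] := IHT; last by exists T0; last exact: leqW.
  by move=> k; rewrite leq_eqVlt => /predU1P [<-|/arr].
by exists T.+1 => //; apply: arrival_time_succ => // /eqP; rewrite (negbTE pT).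
Qed.
End Walks.

Section PrioritizedPlanning.
Variables (V : finType) (e : rel V) (M : nat) (s t : 'I_M -> V).
Variable prec : 'I_M -> 'I_M -> Prop.

Lemma min_arrival_avoiding_le (pi : 'I_M -> walk V) i T p T' :
  min_arrival_avoiding e s t prec pi i T -> is_path e (s i) (t i) p ->
  avoids_higher prec pi i p -> arrived_from p (t i) T' -> T <= T'.
Proof.
move=> [_ T_min] path_p avoid_p /arrival_time_exists [T0 arr0 T0T'].
exact: leq_trans (T_min p T0 path_p avoid_p arr0) T0T'.
Qed.

Lemma pp_run_unconstrained_hop (pi : 'I_M -> walk V) j :
  pp_run e s t prec pi -> (forall k, ~ prec k j) -> e (s j) (t j) ->
  forall k, 0 < k -> pi j k = t j.
Proof.
move=> run j_top hop; have [_ [_ [T [[arr _] T_min]]]] := run j.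
pose p : walk V := fun k => if k is 0 then s j else t j.
have T1 : T <= 1.
  apply: (min_arrival_avoiding_le T_min (p := p)) => [|k /j_top //|[|k] //].
  by split=> //; split; [case=> [|k]; [right|left]|exists 1 => -[|k]].
by move=> k k_gt0; apply: arr; apply: leq_trans k_gt0.
Qed.

Lemma solution_consistent (pi : 'I_M -> walk V) (T : 'I_M -> nat) :
  (forall i, ~ prec i i) -> solution e s t pi ->
  (forall i, arrival_time (pi i) (t i) (T i)) ->
  (forall i p T', is_path e (s i) (t i) p -> avoids_higher prec pi i p ->
     arrived_from p (t i) T' -> T i <= T') ->
  consistent_solution e s t prec pi.
Proof.
move=> irr [paths no_collide] arr T_min; split=> // i.
exists (T i); split; first exact: arr.
split=> [|p T' path_p avoid_p [arr_p _]]; last exact: T_min arr_p.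
exists (pi i); split=> //; split=> // k ki; apply: no_collide.
by apply: contraTneq isT => ik; move: ki; rewrite ik => /irr.
Qed.
End PrioritizedPlanning.

Definition star {T : finType} : rel (option T) := fun x y => (x == None) != (y == None).

Section Star.
Variable T : finType.
Notation V := (option T).

Lemma star_undirected_connected : undirected_connected (@star T).
Proof.
have center_connect (y : V) : connect star None y.
  by case: y => [y|]; [apply: connect1|apply: connect0].
split; [by move=> x y; rewrite /star eq_sym|split; first by move=> x; rewrite /star eqxx].
move=> [x|] y; last exact: center_connect.
by apply: connect_trans (center_connect y); apply: connect1.
Qed.

Lemma star_walk_stays_or_visits_center (p : walk V) :
  (forall k, p k.+1 = p k \/ star (p k) (p k.+1)) ->
  forall n, p n = p 0 \/ exists k, p k = None.
Proof.
move=> step; elim=> [|n [pn|]]; [by left| |by right].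
case: (step n) => [->|]; first by left.
have [|pn1] := eqVneq (p n.+1) None; first by right; exists n.+1.
by rewrite /star (negbTE pn1) eqbF_neg negbK => /eqP; right; exists n.
Qed.

Lemma star_path_visits_center x y (p : walk V) :
  is_path star x y p -> x != y -> exists k, p k = None.
Proof.
move=> [p0 [step [n arr]]] xy.
case: (star_walk_stays_or_visits_center step n) => // pn.
by move: xy; rewrite -p0 -pn (arr n (leqnn n)) eqxx.
Qed.

Lemma star_leaf_to_leaf_late x y (p : walk V) n :
  is_path star (Some x) (Some y) p -> x != y -> arrived_from p (Some y) n -> 1 < n.
Proof.
move=> [p0 [step _]] xy arr; case: n arr => [|[|n]] // arr.
  by move: (arr 0 isT); rewrite p0 => -[/eqP]; rewrite (negbTE xy).
by case: (step 0); rewrite p0 arr // => -[/eqP]; rewrite eq_sym (negbTE xy).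
Qed.
End Star.

Section Obstruction.
Variables (M : nat) (a b : 'I_M).
Hypothesis a_neq_b : a != b.
Notation V := (option (option 'I_M)).

Definition leaf (i : 'I_M) : V := Some (Some i).
Definition spare : V := Some None.
Definition target (i : 'I_M) : V :=
  if i == a then spare else if i == b then None else leaf i.

Definition plan_a : walk V :=
  fun k => match k with 0 => leaf a | 1 => None | _ => spare end.
Definition plan_b : walk V := fun k => match k with 0 | 1 => leaf b | _ => None end.
Definition plan (i : 'I_M) : walk V :=
  if i == a then plan_a else if i == b then plan_b else fun=> leaf i.
Definition arrival (i : 'I_M) : nat := if (i == a) || (i == b) then 2 else 0.

Definition a_before_b (i j : 'I_M) : Prop := i = a /\ j = b.

Variant agent_spec (i : 'I_M) : V -> walk V -> nat -> Prop :=
  | AgentA of i = a : agent_spec i spare plan_a 2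
  | AgentB of i = b : agent_spec i None plan_b 2
  | AgentOther of i != a & i != b : agent_spec i (leaf i) (fun=> leaf i) 0.

Lemma agentP i : agent_spec i (target i) (plan i) (arrival i).
Proof.
rewrite /target /plan /arrival; have [->|ia] := eqVneq i a; first exact: AgentA.
by have [->|ib] := eqVneq i b; [apply: AgentB|apply: AgentOther].
Qed.

Lemma leaf_inj : injective leaf. Proof. by move=> i j []. Qed.

Lemma star_mapf_instance : mapf_instance star leaf target.
Proof.
split; first exact: star_undirected_connected.
split=> [|i j]; first exact: leaf_inj.
case: agentP => [->|->|ia ib]; case: agentP => [->|->|ja jb] //;
  by [move/eqP: a_neq_b | move/eqP: a_neq_b; rewrite eq_sym | case=> ->].
Qed.

Lemma plan_avoids_leaf i j k : i != j -> plan i k <> leaf j.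
Proof.
move=> ij; have : plan i k \in [:: leaf i; None; spare].
  case: agentP => [->|->|]; [case: k => [|[|k]]|case: k => [|[|k]]|];
  by rewrite !inE eqxx ?orbT.
by rewrite !inE => /or3P [/eqP->/leaf_inj/eqP|/eqP->|/eqP->] //; rewrite (negbTE ij).
Qed.

Lemma plan_ab_no_collide : ~ collide (plan a) (plan b).
Proof.
have /eqP leaf_ab : leaf a != leaf b by apply: contraNneq a_neq_b => /leaf_inj ->.
rewrite /plan eqxx eq_sym (negbTE a_neq_b) eqxx.
by case=> -[|[|k]] /=; rewrite /= ?leaf_ab; intuition discriminate.
Qed.

Lemma plan_is_path i : is_path star (leaf i) (target i) (plan i).
Proof.
case: agentP => [->|->|_ _]; split=> //; split.
- by case=> [|[|k]]; [right|right|left].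
- by exists 2 => -[|[|k]].
- by case=> [|[|k]]; [left|right|left].
- by exists 2 => -[|[|k]].
- by left.
- by exists 0.
Qed.

Lemma plan_solution : solution star leaf target plan.
Proof.
split=> [|i j]; first exact: plan_is_path.
have const_ok k l : k != l -> l != a -> l != b -> ~ collide (plan k) (plan l).
  move=> kl la lb; rewrite {2}/plan (negbTE la) (negbTE lb).
  by apply: no_collide_const => n; apply: plan_avoids_leaf.
have sym_ok k l : ~ collide (plan l) (plan k) -> ~ collide (plan k) (plan l).
  by move=> lk /collide_sym.
have [->|ja] := eqVneq j a; last have [->|jb] := eqVneq j b.
- move=> ia; have [->|ib] := eqVneq i b; apply: sym_ok; first exact: plan_ab_no_collide.
  by apply: const_ok; rewrite // eq_sym.
- move=> ib; have [->|ia] := eqVneq i a; first exact: plan_ab_no_collide.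
  by apply: sym_ok; apply: const_ok; rewrite // eq_sym.
- by move=> ij; apply: const_ok.
Qed.

Lemma plan_arrival_time i : arrival_time (plan i) (target i) (arrival i).
Proof.
case: agentP => [_|_|_ _]; last by split.
- by apply: arrival_time_succ => // -[|[|k]].
- by apply: arrival_time_succ => // -[|[|k]].
Qed.

Lemma plan_arrival_optimal i p T :
  is_path star (leaf i) (target i) p -> avoids_higher a_before_b plan i p ->
  arrived_from p (target i) T -> arrival i <= T.
Proof.
case: agentP => [->|->|//] path_p.
  by move=> _; apply: star_leaf_to_leaf_late path_p _.
move=> avoid_p arr; case: path_p => p0 _; case: T arr => [|[|T]] // arr.
  by move: (arr 0 isT); rewrite p0.
case: (avoid_p a (conj erefl erefl)); exists 1; left.
by rewrite arr // /plan eqxx.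
Qed.

Lemma star_P_solvable : P_solvable star leaf target.
Proof.
have a_before_b_irr i : ~ a_before_b i i by case=> -> /eqP; rewrite (negbTE a_neq_b).
exists a_before_b; split.
  by split=> [//|i j k] [_ ->] [/eqP]; rewrite eq_sym (negbTE a_neq_b).
exists plan; apply: (solution_consistent (T := arrival)).
- exact: a_before_b_irr.
- exact: plan_solution.
- exact: plan_arrival_time.
- exact: plan_arrival_optimal.
Qed.

Lemma star_pp_fails (prec : 'I_M -> 'I_M -> Prop) :
  (forall k, ~ prec k b) -> ~ pp_results_in_solution star leaf target prec.
Proof.
move=> b_top [pi [run [paths no_collide]]].
have target_b : target b = None by rewrite /target eq_sym (negbTE a_neq_b) eqxx.
have pi_b k : 0 < k -> pi b k = None.
  by rewrite -target_b; apply: (pp_run_unconstrained_hop run b_top); rewrite target_b.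
have [|k pi_a_k] := star_path_visits_center (paths a).
  by rewrite /target eqxx.
apply: (no_collide a b a_neq_b); exists k; left; rewrite pi_a_k pi_b // lt0n.
by apply: contraTneq isT => k0; move: pi_a_k; rewrite k0 (proj1 (paths a)).
Qed.
End Obstruction.

Theorem theorem2 (M : nat) (prec : 'I_M -> 'I_M -> Prop) :
  2 <= M -> strict_partial_order prec ->
  exists (V : finType) (e : rel V) (s t : 'I_M -> V),
    mapf_instance e s t /\ P_solvable e s t /\
    ~ pp_results_in_solution e s t prec.
Proof.
move=> M2 [irr trans]; pose i0 := Ordinal (ltnW M2).
have [b b_top] := strict_order_minimal i0 irr trans.
have [a a_neq_b] : exists a : 'I_M, a != b.
  have [b0|] := eqVneq i0 b; last by exists i0.
  by exists (Ordinal M2); rewrite -b0.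
exists (option (option 'I_M)), star, (@leaf M), (target a b).
split; first exact: star_mapf_instance.
split; first exact: star_P_solvable.
exact: star_pp_fails.
Qed.
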